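(* Let $p\in(0,1)$, $\gamma>0$, $B>0$, $w\in\mathbb{N}$, for each $N\in\mathbb{N}$ let $(\xi_j^{(N)*})_{j=1}^N$ be the unique maximizer of $\mathcal{T}_N$, and let $B^{(N)}=B-\sum_{i=1}^N\xi_i^{(N)*}$. Then $\lim_{N\to\infty}B^{(N)}=0$.
   Context: Logarithms are base 2. For an admissible (nonnegative, with sum at most $B$) sequence $(x_j)_{j\ge1}$, $$\mathcal{T}_\infty(x_1,x_2,\dots)=\sum_{k=1}^{w}p^2(1-p)^{k-1}\frac{k}{2}\log_2\!\Big(1+\gamma\frac{B}{k}\Big)+\sum_{j=1}^{\infty}p(1-p)^{j+w-1}\frac12\log_2(1+\gamma x_j)+\sum_{k=1}^{\infty}p^2(1-p)^{k+w-1}\frac{w}{2}\log_2\!\Big(1+\gamma\frac{B-\sum_{j=1}^{k}x_j}{w}\Big).$$ For $N\in\mathbb{N}$ and $\xi_1,\dots,\xi_N\ge0$ with $\sum_{j=1}^N\xi_j\le B$, define $\mathcal{T}_N(\xi_1,\dots,\xi_N)=\mathcal{T}_\infty(\xi_1,\dots,\xi_N,0,0,\dots)$. $\mathcal{T}_N$ has a unique maximizer over this compact set, denoted $(\xi_j^{(N)*})_{j=1}^N$. *)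

From Stdlib Require Import Reals Lra.
From Coquelicot Require Import Coquelicot.
Open Scope R_scope.

Definition log2 (x : R) : R := ln x / ln 2.

Fixpoint psum (f : nat -> R) (n : nat) : R :=
  match n with
  | O => 0
  | S m => psum f m + f m
  end.

(* Sequences are 0-indexed: x j (j >= 0) stands for the paper's x_{j+1}. *)
Definition T_inf (p gamma B : R) (w : nat) (x : nat -> R) : R :=
  (* sum_{k=1}^{w} p^2 (1-p)^{k-1} (k/2) log2(1 + gamma B / k), reindexed k = k'+1 *)
  psum (fun k => p ^ 2 * (1 - p) ^ k * (INR (S k) / 2)
                 * log2 (1 + gamma * (B / INR (S k)))) w
  (* sum_{j>=1} p (1-p)^{j+w-1} (1/2) log2(1 + gamma x_j), reindexed j = j'+1 *)
  + Series (fun j => p * (1 - p) ^ (j + w) * (1 / 2) * log2 (1 + gamma * x j))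
  (* sum_{k>=1} p^2 (1-p)^{k+w-1} (w/2) log2(1 + gamma (B - sum_{j=1}^k x_j)/w) *)
  + Series (fun k => p ^ 2 * (1 - p) ^ (k + w) * (INR w / 2)
                     * log2 (1 + gamma * ((B - psum x (S k)) / INR w))).

Definition pad (N : nat) (xi : nat -> R) : nat -> R :=
  fun j => if (j <? N)%nat then xi j else 0.

Definition T_N (p gamma B : R) (w N : nat) (xi : nat -> R) : R :=
  T_inf p gamma B w (pad N xi).

Definition admissibleN (B : R) (N : nat) (xi : nat -> R) : Prop :=
  (forall j, (j < N)%nat -> 0 <= xi j) /\ psum xi N <= B.

Definition is_maximizer_TN (p gamma B : R) (w N : nat) (xi : nat -> R) : Prop :=
  admissibleN B N xi /\
  forall y, admissibleN B N y -> T_N p gamma B w N y <= T_N p gamma B w N xi.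

(* Let r = B - sum_j x_j be the budget a maximizer x of T_N leaves unused.  If some
   coordinate had x_j < r / w, moving a small amount d of the unused budget into slot j
   would raise the j-th allocation term by about p (1-p)^(j+w) gamma d / (1 + gamma x_j),
   while the leftover terms k >= j, whose weights p^2 (1-p)^(k+w) sum to p (1-p)^(j+w),
   would drop by only about p (1-p)^(j+w) gamma d / (1 + gamma r / w) in total: a strict
   improvement.  So every coordinate is at least r / w, whence N r / w <= B - r and
   r <= w B / N. *)

From Stdlib Require Import Reals Lra Lia.
From Coquelicot Require Import Coquelicot.
Open Scope R_scope.

Lemma ln_sub_ge a b : 0 < a -> 0 < b -> (b - a) / b <= ln b - ln a.
Proof.
  intros Ha Hb.
  assert (Hexp := exp_ineq1_le (ln (a / b))).
  rewrite exp_ln, ln_div in Hexp by (try apply Rdiv_lt_0_compat; lra).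
  replace ((b - a) / b) with (1 - a / b) by (field; lra).
  lra.
Qed.

Lemma ln2_pos : 0 < ln 2.
Proof. pose proof ln_lt_2. lra. Qed.

Lemma log2_sub a b : log2 b - log2 a = (ln b - ln a) / ln 2.
Proof. unfold log2. pose proof ln2_pos. field. lra. Qed.

Section Log2OnePlus.

Variable gamma : R.
Hypothesis gamma_pos : 0 < gamma.

Lemma log2_1p_le s t : 0 <= s <= t -> 0 <= log2 (1 + gamma * s) <= log2 (1 + gamma * t).
Proof.
  intros Hst. unfold log2. pose proof ln2_pos.
  assert (0 <= gamma * s <= gamma * t) by (split; nra).
  split.
  - apply Rdiv_le_0_compat; [rewrite <- ln_1; apply ln_le|]; lra.
  - apply Rmult_le_compat_r; [left; apply Rinv_0_lt_compat; lra|]. apply ln_le; lra.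
Qed.

Lemma log2_1p_sub_ge s d : 0 <= s -> 0 <= d ->
  gamma * d / ((1 + gamma * (s + d)) * ln 2)
  <= log2 (1 + gamma * (s + d)) - log2 (1 + gamma * s).
Proof.
  intros Hs Hd. rewrite log2_sub. pose proof ln2_pos.
  assert (0 <= gamma * s) by nra. assert (0 <= gamma * d) by nra.
  assert (Hln := ln_sub_ge (1 + gamma * s) (1 + gamma * (s + d)) ltac:(lra) ltac:(lra)).
  replace (gamma * d / ((1 + gamma * (s + d)) * ln 2))
    with ((1 + gamma * (s + d) - (1 + gamma * s)) / (1 + gamma * (s + d)) / ln 2)
    by (field; lra).
  apply Rmult_le_compat_r; [left; apply Rinv_0_lt_compat|]; lra.
Qed.

Lemma log2_1p_sub_le s0 s d : 0 <= s0 <= s -> 0 <= d ->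
  log2 (1 + gamma * (s + d)) - log2 (1 + gamma * s)
  <= gamma * d / ((1 + gamma * s0) * ln 2).
Proof.
  intros Hs Hd. rewrite log2_sub. pose proof ln2_pos.
  assert (0 <= gamma * s0 <= gamma * s) by (split; nra). assert (0 <= gamma * d) by nra.
  assert (Hln := ln_sub_ge (1 + gamma * (s + d)) (1 + gamma * s) ltac:(lra) ltac:(lra)).
  apply Rle_trans with (gamma * d / ((1 + gamma * s) * ln 2)).
  - replace (gamma * d / ((1 + gamma * s) * ln 2))
      with (- ((1 + gamma * s - (1 + gamma * (s + d))) / (1 + gamma * s)) / ln 2)
      by (field; lra).
    apply Rmult_le_compat_r; [left; apply Rinv_0_lt_compat|]; lra.
  - apply Rmult_le_compat_l; [lra|].
    apply Rinv_le_contravar; [apply Rmult_lt_0_compat|apply Rmult_le_compat_r]; lra.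
Qed.

End Log2OnePlus.

Lemma ex_series_geom_weighted (a b q M : R) (w : nat) (v : nat -> R) :
  0 <= a -> 0 <= b -> 0 <= q < 1 -> (forall k, 0 <= v k <= M) ->
  ex_series (fun k => a * q ^ (k + w) * b * v k).
Proof.
  intros Ha Hb Hq Hv.
  apply (@ex_series_le R_AbsRing R_CompleteNormedModule)
    with (b := fun k => scal (a * q ^ w * b * M) (q ^ k)).
  - intros k. change (norm ?x) with (Rabs x). change scal with Rmult. simpl.
    assert (0 <= a * q ^ k * q ^ w * b)
      by (repeat apply Rmult_le_pos; try apply pow_le; lra).
    destruct (Hv k). rewrite pow_add, Rabs_pos_eq by nra. nra.
  - apply (@ex_series_scal_l R_AbsRing R_NormedModule), ex_series_geom.
    rewrite Rabs_pos_eq; lra.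
Qed.

Lemma Series_single (u : nat -> R) j : (forall k, k <> j -> u k = 0) -> Series u = u j.
Proof.
  intros Hu.
  assert (Hsum : forall n, sum_n u n = if (n <? j)%nat then 0 else u j).
  { induction n as [|n IH].
    - rewrite sum_O. destruct (Nat.ltb_spec 0 j) as [Hj|Hj]; [apply Hu; lia|].
      replace j with 0%nat by lia. reflexivity.
    - rewrite sum_Sn, IH. change plus with Rplus.
      destruct (Nat.eq_dec (S n) j) as [<-|Hne].
      + destruct (Nat.ltb_spec n (S n)), (Nat.ltb_spec (S n) (S n)); lia || lra.
      + rewrite (Hu (S n) Hne).
        destruct (Nat.ltb_spec n j), (Nat.ltb_spec (S n) j); lia || lra. }
  apply is_series_unique, filterlim_ext_loc with (fun _ => u j).
  - exists j. intros n Hn. rewrite Hsum. destruct (Nat.ltb_spec n j); [lia|reflexivity].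
  - apply filterlim_const.
Qed.

Lemma is_lim_seq_div_INR (K : R) : is_lim_seq (fun n => K / INR n) 0.
Proof.
  replace (Finite 0) with (Rbar_mult K (Rbar_inv p_infty)) by (simpl; f_equal; ring).
  apply is_lim_seq_scal_l, is_lim_seq_inv; [apply is_lim_seq_INR| discriminate].
Qed.

Lemma psum_mono (z : nat -> R) m n :
  (forall i, (i < n)%nat -> 0 <= z i) -> (m <= n)%nat -> psum z m <= psum z n.
Proof.
  intros Hz Hmn. induction Hmn as [|n Hmn IH]; simpl; [lra|].
  assert (0 <= z n) by (apply Hz; lia).
  assert (psum z m <= psum z n) by (apply IH; intros; apply Hz; lia).
  lra.
Qed.

Lemma psum_ge_const (z : nat -> R) c n :
  (forall i, (i < n)%nat -> c <= z i) -> INR n * c <= psum z n.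
Proof.
  induction n as [|n IH]; intros Hz; simpl psum; [simpl; lra|].
  rewrite S_INR.
  assert (INR n * c <= psum z n) by (apply IH; intros; apply Hz; lia).
  assert (c <= z n) by (apply Hz; lia).
  lra.
Qed.

Lemma psum_pad N (z : nat -> R) n : psum (pad N z) n = psum z (Nat.min n N).
Proof.
  induction n as [|n IH]; [reflexivity|].
  cbn [psum]. rewrite IH. unfold pad.
  destruct (Nat.ltb_spec n N).
  - replace (Nat.min (S n) N) with (S n) by lia. rewrite Nat.min_l by lia. reflexivity.
  - replace (Nat.min (S n) N) with N by lia. rewrite Nat.min_r by lia. lra.
Qed.

Lemma psum_pad_bounds B N (z : nat -> R) n :
  admissibleN B N z -> 0 <= psum (pad N z) n <= psum z N.
Proof.
  intros [Hz _]. rewrite psum_pad.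
  split.
  - apply (psum_mono z 0); [intros i Hi; apply Hz|]; lia.
  - apply psum_mono; auto; lia.
Qed.

Lemma pad_bounds B N (z : nat -> R) k : admissibleN B N z -> 0 <= pad N z k <= B.
Proof.
  intros Hadm.
  assert (Hk := psum_pad_bounds B N z k Hadm).
  assert (HSk := psum_pad_bounds B N z (S k) Hadm).
  simpl psum in HSk. destruct Hadm as [Hz Hs].
  unfold pad in *. destruct (Nat.ltb_spec k N); [|lra].
  split; [apply Hz; lia|lra].
Qed.

Definition bump (x : nat -> R) (j : nat) (d : R) : nat -> R :=
  fun i => if (i =? j)%nat then x i + d else x i.

Lemma psum_bump x j d n : psum (bump x j d) n = psum x n + if (j <? n)%nat then d else 0.
Proof.
  induction n as [|n IH]; simpl psum; [destruct (Nat.ltb_spec j 0); lia || lra|].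
  rewrite IH. unfold bump.
  destruct (Nat.eqb_spec n j), (Nat.ltb_spec j n), (Nat.ltb_spec j (S n)); lia || lra.
Qed.

Lemma pad_bump N x j d i : (j < N)%nat -> pad N (bump x j d) i = bump (pad N x) j d i.
Proof.
  intros Hj. unfold pad, bump.
  destruct (Nat.eqb_spec i j) as [->|]; [|reflexivity].
  destruct (Nat.ltb_spec j N); [reflexivity|lia].
Qed.

Lemma bump_admissible B N x j d :
  admissibleN B N x -> (j < N)%nat -> 0 <= d -> d <= B - psum x N ->
  admissibleN B N (bump x j d).
Proof.
  intros [Hx Hs] Hj Hd HdB. split.
  - intros i Hi. unfold bump. specialize (Hx i Hi). destruct (i =? j)%nat; lra.
  - rewrite psum_bump. destruct (Nat.ltb_spec j N); lra || lia.
Qed.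

Lemma psum_pad_bump N x j d n : (j < N)%nat ->
  psum (pad N (bump x j d)) n = psum (pad N x) n + if (j <? n)%nat then d else 0.
Proof.
  intros Hj. rewrite !psum_pad, psum_bump.
  destruct (Nat.ltb_spec j (Nat.min n N)), (Nat.ltb_spec j n); lia || lra.
Qed.

Section Improvement.

Variables (p gamma B : R) (w : nat).
Hypotheses (p_range : 0 < p < 1) (gamma_pos : 0 < gamma) (w_pos : (1 <= w)%nat).

Definition alloc_term (x : nat -> R) (j : nat) : R :=
  p * (1 - p) ^ (j + w) * (1 / 2) * log2 (1 + gamma * x j).

Definition leftover_term (x : nat -> R) (k : nat) : R :=
  p ^ 2 * (1 - p) ^ (k + w) * (INR w / 2)
  * log2 (1 + gamma * ((B - psum x (S k)) / INR w)).

Lemma T_N_sub N x y :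
  T_N p gamma B w N y - T_N p gamma B w N x
  = (Series (alloc_term (pad N y)) - Series (alloc_term (pad N x)))
    + (Series (leftover_term (pad N y)) - Series (leftover_term (pad N x))).
Proof. unfold T_N, T_inf, alloc_term, leftover_term. ring. Qed.

Lemma ex_series_alloc_term N z : admissibleN B N z -> ex_series (alloc_term (pad N z)).
Proof.
  intros Hadm.
  apply ex_series_geom_weighted with (M := log2 (1 + gamma * B));
    [lra | lra | lra | intros k].
  apply log2_1p_le; auto. apply (pad_bounds B N z k Hadm).
Qed.

Lemma ex_series_leftover_term N z :
  admissibleN B N z -> ex_series (leftover_term (pad N z)).
Proof.
  intros Hadm.
  assert (HW : 1 <= INR w) by (apply (le_INR 1); lia).
  apply ex_series_geom_weighted with (M := log2 (1 + gamma * B));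
    [apply pow_le; lra | apply Rdiv_le_0_compat; lra | lra | intros k].
  apply log2_1p_le; auto.
  destruct (psum_pad_bounds B N z (S k) Hadm). destruct Hadm as [_ Hs].
  set (u := B - psum (pad N z) (S k)).
  assert (0 < / INR w <= 1) by (split; [apply Rinv_0_lt_compat | rewrite <- Rinv_1;
    apply Rinv_le_contravar]; lra).
  unfold Rdiv. split; unfold u in *; nra.
Qed.

Lemma Series_alloc_term_bump N x j d :
  admissibleN B N x -> (j < N)%nat -> 0 <= d <= B - psum x N ->
  p * (1 - p) ^ (j + w) / 2 * (gamma * d / ((1 + gamma * (x j + d)) * ln 2))
  <= Series (alloc_term (pad N (bump x j d))) - Series (alloc_term (pad N x)).
Proof.
  intros Hadm Hj Hd.
  assert (Hadm' := bump_admissible B N x j d Hadm Hj (proj1 Hd) (proj2 Hd)).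
  rewrite <- Series_minus by (apply ex_series_alloc_term; assumption).
  rewrite (Series_single _ j).
  2:{ intros k Hk. unfold alloc_term. rewrite pad_bump by exact Hj.
      unfold bump. destruct (Nat.eqb_spec k j); [contradiction|ring]. }
  unfold alloc_term. rewrite pad_bump by exact Hj.
  unfold bump, pad. rewrite Nat.eqb_refl. destruct (Nat.ltb_spec j N); [|lia].
  assert (Hxj : 0 <= x j) by (apply (proj1 Hadm); exact Hj).
  assert (Hlog := log2_1p_sub_ge gamma gamma_pos (x j) d Hxj (proj1 Hd)).
  assert (0 <= p * (1 - p) ^ (j + w) / 2)
    by (apply Rdiv_le_0_compat; [apply Rmult_le_pos; [|apply pow_le]|]; lra).
  replace (p * (1 - p) ^ (j + w) * (1 / 2) * log2 (1 + gamma * (x j + d))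
           - p * (1 - p) ^ (j + w) * (1 / 2) * log2 (1 + gamma * x j))
    with (p * (1 - p) ^ (j + w) / 2
          * (log2 (1 + gamma * (x j + d)) - log2 (1 + gamma * x j))) by field.
  apply Rmult_le_compat_l; assumption.
Qed.

Lemma leftover_term_bump_prefix N x j d k : (j < N)%nat -> (k < j)%nat ->
  leftover_term (pad N (bump x j d)) k = leftover_term (pad N x) k.
Proof.
  intros Hj Hk. unfold leftover_term. rewrite psum_pad_bump by exact Hj.
  destruct (Nat.ltb_spec j (S k)); [lia|]. rewrite Rplus_0_r. reflexivity.
Qed.

Lemma leftover_term_bump_loss N x j d k :
  admissibleN B N x -> (j < N)%nat -> (j <= k)%nat -> 0 <= d <= B - psum x N ->
  0 <= leftover_term (pad N x) k - leftover_term (pad N (bump x j d)) k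
    <= p ^ 2 * (1 - p) ^ (k + w) / 2
       * (gamma * d / ((1 + gamma * ((B - psum x N - d) / INR w)) * ln 2)).
Proof.
  intros Hadm Hj Hjk Hd.
  assert (HW : 1 <= INR w) by (apply (le_INR 1); lia).
  unfold leftover_term. rewrite psum_pad_bump by exact Hj.
  destruct (Nat.ltb_spec j (S k)); [|lia].
  destruct (psum_pad_bounds B N x (S k) Hadm).
  set (s := (B - psum (pad N x) (S k) - d) / INR w).
  assert (Hs : 0 <= (B - psum x N - d) / INR w <= s).
  { split; [apply Rdiv_le_0_compat|apply Rmult_le_compat_r;
      [left; apply Rinv_0_lt_compat|]]; lra. }
  assert (Hdw : 0 <= d / INR w) by (apply Rdiv_le_0_compat; lra).
  replace ((B - (psum (pad N x) (S k) + d)) / INR w) with s by (unfold s; field; lra).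
  replace ((B - psum (pad N x) (S k)) / INR w) with (s + d / INR w) by (unfold s; field; lra).
  assert (Hlog := log2_1p_sub_le gamma gamma_pos _ s (d / INR w) Hs Hdw).
  assert (Hmono := log2_1p_le gamma gamma_pos s (s + d / INR w) ltac:(lra)).
  set (M := gamma * d / ((1 + gamma * ((B - psum x N - d) / INR w)) * ln 2)).
  replace (gamma * (d / INR w) / ((1 + gamma * ((B - psum x N - d) / INR w)) * ln 2))
    with (M / INR w) in Hlog by (unfold M; field; pose proof ln2_pos; nra).
  set (K := p ^ 2 * (1 - p) ^ (k + w)).
  assert (0 <= K) by (apply Rmult_le_pos; apply pow_le; lra).
  replace (K * (INR w / 2) * log2 (1 + gamma * (s + d / INR w))
           - K * (INR w / 2) * log2 (1 + gamma * s))
    with (K * (INR w / 2)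
          * (log2 (1 + gamma * (s + d / INR w)) - log2 (1 + gamma * s))) by ring.
  assert (0 <= K * (INR w / 2)) by (apply Rmult_le_pos; lra).
  split; [apply Rmult_le_pos; lra|].
  apply Rle_trans with (K * (INR w / 2) * (M / INR w)); [apply Rmult_le_compat_l; lra|].
  right. field. lra.
Qed.

Lemma Series_leftover_term_bump N x j d :
  admissibleN B N x -> (j < N)%nat -> 0 <= d <= B - psum x N ->
  Series (leftover_term (pad N x)) - Series (leftover_term (pad N (bump x j d)))
  <= p * (1 - p) ^ (j + w) / 2
     * (gamma * d / ((1 + gamma * ((B - psum x N - d) / INR w)) * ln 2)).
Proof.
  intros Hadm Hj Hd.
  assert (Hadm' := bump_admissible B N x j d Hadm Hj (proj1 Hd) (proj2 Hd)).
  set (L := gamma * d / ((1 + gamma * ((B - psum x N - d) / INR w)) * ln 2)).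
  set (c := p ^ 2 * (1 - p) ^ (j + w) / 2 * L).
  assert (Hgeom : forall k, p ^ 2 * (1 - p) ^ (j + k + w) / 2 * L = c * (1 - p) ^ k).
  { intros k. unfold c. replace (j + k + w)%nat with (k + (j + w))%nat by lia.
    rewrite pow_add. field. }
  assert (Hq : Rabs (1 - p) < 1) by (rewrite Rabs_pos_eq; lra).
  rewrite <- Series_minus by (apply ex_series_leftover_term; assumption).
  rewrite (Series_incr_n_aux _ j).
  2:{ intros k Hk. rewrite leftover_term_bump_prefix by assumption. ring. }
  apply Rle_trans with (Series (fun k => c * (1 - p) ^ k)).
  - apply Series_le.
    + intros k. rewrite <- Hgeom. apply leftover_term_bump_loss; auto; lia.
    + apply (@ex_series_scal_l R_AbsRing R_NormedModule), ex_series_geom, Hq.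
  - rewrite Series_scal_l, Series_geom by exact Hq.
    unfold c. apply Req_le. field. lra.
Qed.

Lemma T_N_bump_gain N x j d :
  admissibleN B N x -> (j < N)%nat -> 0 <= d <= B - psum x N ->
  p * (1 - p) ^ (j + w) / 2
  * (gamma * d / ((1 + gamma * (x j + d)) * ln 2)
     - gamma * d / ((1 + gamma * ((B - psum x N - d) / INR w)) * ln 2))
  <= T_N p gamma B w N (bump x j d) - T_N p gamma B w N x.
Proof.
  intros Hadm Hj Hd. rewrite T_N_sub.
  assert (Halloc := Series_alloc_term_bump N x j d Hadm Hj Hd).
  assert (Hleft := Series_leftover_term_bump N x j d Hadm Hj Hd).
  lra.
Qed.

Lemma maximizer_ge_leftover_share N x j :
  is_maximizer_TN p gamma B w N x -> (j < N)%nat -> (B - psum x N) / INR w <= x j.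
Proof.
  intros [Hadm Hmax] Hj.
  assert (HW : 1 <= INR w) by (apply (le_INR 1); lia).
  pose proof ln2_pos.
  set (r := B - psum x N).
  destruct (Rle_or_lt (r / INR w) (x j)) as [Hle|Hlt]; [exact Hle|exfalso].
  assert (Hxj : 0 <= x j) by (apply (proj1 Hadm); exact Hj).
  assert (Hgap : INR w * x j < r).
  { apply (Rmult_lt_compat_l (INR w)) in Hlt; [|lra].
    replace (INR w * (r / INR w)) with r in Hlt by (field; lra). exact Hlt. }
  (* small enough that the raised coordinate stays below the leftover share (r - d) / w *)
  set (d := (r - INR w * x j) / (2 * (INR w + 1))).
  assert (Hd : 0 < d) by (apply Rdiv_lt_0_compat; lra).
  assert (Hdd : (INR w + 1) * d = (r - INR w * x j) / 2) by (unfold d; field; lra).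
  assert (Hbelow : x j + d < (r - d) / INR w).
  { apply (Rmult_lt_reg_l (INR w)); [lra|].
    replace (INR w * ((r - d) / INR w)) with (r - d) by (field; lra). nra. }
  assert (Hdr : 0 <= d <= r) by nra.
  assert (Hgain := T_N_bump_gain N x j d Hadm Hj Hdr).
  assert (Hopt := Hmax (bump x j d) (bump_admissible B N x j d Hadm Hj (proj1 Hdr) (proj2 Hdr))).
  assert (Hrate : gamma * d / ((1 + gamma * ((r - d) / INR w)) * ln 2)
                  < gamma * d / ((1 + gamma * (x j + d)) * ln 2)).
  { apply Rmult_lt_compat_l; [nra|].
    apply Rinv_lt_contravar; [apply Rmult_lt_0_compat; apply Rmult_lt_0_compat|
                              apply Rmult_lt_compat_r]; nra. }
  assert (0 < p * (1 - p) ^ (j + w) / 2)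
    by (apply Rdiv_lt_0_compat; [apply Rmult_lt_0_compat; [|apply pow_lt]|]; lra).
  fold r in Hgain. nra.
Qed.

Lemma maximizer_leftover_le N x : (1 <= N)%nat ->
  is_maximizer_TN p gamma B w N x -> 0 <= B - psum x N <= INR w * B / INR N.
Proof.
  intros HN Hx.
  assert (HW : 1 <= INR w) by (apply (le_INR 1); lia).
  assert (HN' : 1 <= INR N) by (apply (le_INR 1); lia).
  assert (Hge := psum_ge_const x _ N (fun j => maximizer_ge_leftover_share N x j Hx)).
  destruct Hx as [[Hx Hs] _].
  assert (0 <= psum x N) by (apply (psum_mono x 0); auto; lia).
  split; [lra|].
  apply Rle_div_r; [lra|].
  replace ((B - psum x N) * INR N) with (INR w * (INR N * ((B - psum x N) / INR w)))
    by (field; lra).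
  apply Rle_trans with (INR w * psum x N); [apply Rmult_le_compat_l|]; nra.
Qed.

End Improvement.

Theorem corollary3 (p gamma B : R) (w : nat) (xi : nat -> nat -> R) :
  0 < p < 1 -> 0 < gamma -> 0 < B -> (1 <= w)%nat ->
  (forall N : nat, (1 <= N)%nat -> is_maximizer_TN p gamma B w N (xi N)) ->
  is_lim_seq (fun N : nat => B - psum (xi N) N) 0.
Proof.
  intros Hp Hg _ Hw Hmax.
  apply is_lim_seq_le_le_loc with (fun _ => 0) (fun N => INR w * B / INR N).
  - exists 1%nat. intros N HN.
    exact (maximizer_leftover_le p gamma B w Hp Hg Hw N (xi N) HN (Hmax N HN)).
  - apply is_lim_seq_const.
  - apply is_lim_seq_div_INR.
Qed.
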